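(* Let $\sigma\in S_n$, $\tau\in S_{n+1}$ and $\sigma\prec\tau$. Then $\mathrm{al}(\tau)\le\mathrm{al}(\sigma)+2$ and, for every $k\in\mathbf{N}$, $s_k(\tau)\le s_k(\sigma)+2$.
   Context: $S_n$ is the set of permutations of $[n]$; $\pi\prec\rho$ means $\rho$ has a subsequence order-isomorphic to $\pi$. For a permutation $\pi$ of length $n$ and $A\subset[n]$, $\pi|A$ is the permutation order-isomorphic to the subsequence of $\pi$ at positions in $A$. A permutation $\sigma$ is alternating if $\sigma(\{1,3,5,\dots\})>\sigma(\{2,4,6,\dots\})$. $\mathrm{al}(\pi)$ is the maximum length of an alternating permutation $\rho$ with $\rho\prec\pi$ or $\rho\prec\pi^{-1}$. For $\sigma\in S_n,\tau\in S_m$, $\sigma\oplus\tau\in S_{n+m}$ equals $\sigma(i)$ at $i\le n$ and $n+\tau(i-n)$ at $i>n$; $\sigma\ominus\tau$ equals $m+\sigma(i)$ at $i\le n$ and $\tau(i-n)$ at $i>n$. Up-(down-)indecomposable means not of the form $\sigma\oplus\tau$ ($\sigma\ominus\tau$) with both nonempty; $h^+(\pi)$ ($h^-(\pi)$) is the maximum length of a block in the unique decomposition of $\pi$ as a $\oplus$-sum of up-indecomposables ($\ominus$-sum of down-indecomposables). $H_k^\pm=\{\pi:h^\pm(\pi)<k\}$. For $k\ge2$ and $\pi\in S_n$, $s_k(\pi)$ is the number $r$ of intervals in the greedy partition $I_1<\dots<I_r$ of $[n]$ where $I_1$ is the longest initial interval with $\pi|I_1\in H_k^+\cup H_k^-$,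 $I_2$ the longest following interval with $\pi|I_2\in H_k^+\cup H_k^-$, etc. By convention $s_1(\pi)=\infty$ for all $\pi$. *)

(* Permutations of [n] are 'S_n (permutations of 'I_n = {0..n-1}). *)
From mathcomp Require Import all_boot all_fingroup.
From Stdlib Require Import ClassicalEpsilon.

Set Implicit Arguments.
Unset Strict Implicit.
Unset Printing Implicit Defensive.

Definition contains (m n : nat) (rho : 'S_m) (pi : 'S_n) : bool :=
  [exists f : {ffun 'I_m -> 'I_n},
    [forall i : 'I_m, forall j : 'I_m, (i < j) ==> (f i < f j)] &&
    [forall i : 'I_m, forall j : 'I_m, (rho i < rho j) == (pi (f i) < pi (f j))]].

(* alternating: values at odd (1-based) positions exceed values at even
   (1-based) positions; with 0-based indices: even index i, odd index j. *)
Definition alternating (n : nat) (rho : 'S_n) : bool :=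
  [forall i : 'I_n, forall j : 'I_n, (~~ odd i && odd j) ==> (rho j < rho i)].

Definition al (n : nat) (pi : 'S_n) : nat :=
  \max_(m < n.+1 | [exists rho : 'S_m,
                     alternating rho && (contains rho pi || contains rho pi^-1)]) m.

Definition word (n : nat) (pi : 'S_n) : seq nat := [seq (pi i : nat) | i <- enum 'I_n].

(* s is order-isomorphic to sigma (+) tau with |sigma| = i *)
Definition plus_split (s : seq nat) (i : nat) : bool :=
  allrel (fun x y => x < y) (take i s) (drop i s).
(* s is order-isomorphic to sigma (-) tau with |sigma| = i *)
Definition minus_split (s : seq nat) (i : nat) : bool :=
  allrel (fun x y => y < x) (take i s) (drop i s).

Definition up_indec (s : seq nat) : bool :=
  ~~ [exists i : 'I_(size s), (0 < i) && plus_split s i].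
Definition down_indec (s : seq nat) : bool :=
  ~~ [exists i : 'I_(size s), (0 < i) && minus_split s i].

Definition plus_decomp (s : seq nat) (bs : seq (seq nat)) : Prop :=
  [/\ flatten bs = s, all (fun b => b != [::]) bs, all up_indec bs
    & pairwise (fun b c => allrel (fun x y => x < y) b c) bs].
Definition minus_decomp (s : seq nat) (bs : seq (seq nat)) : Prop :=
  [/\ flatten bs = s, all (fun b => b != [::]) bs, all down_indec bs
    & pairwise (fun b c => allrel (fun x y => y < x) b c) bs].

(* h^+(s) = h : the maximum block length in the (unique) decomposition *)
Definition hplus_is (s : seq nat) (h : nat) : Prop :=
  exists bs, plus_decomp s bs /\ h = \max_(b <- bs) size b.
Definition hminus_is (s : seq nat) (h : nat) : Prop :=
  exists bs, minus_decomp s bs /\ h = \max_(b <- bs) size b.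

Definition in_Hplus (k : nat) (s : seq nat) : Prop := exists h, hplus_is s h /\ h < k.
Definition in_Hminus (k : nat) (s : seq nat) : Prop := exists h, hminus_is s h /\ h < k.
Definition in_H (k : nat) (s : seq nat) : Prop := in_Hplus k s \/ in_Hminus k s.

Definition pdec (P : Prop) : bool := if excluded_middle_informative P then true else false.

Definition first_len (k : nat) (s : seq nat) : nat :=
  \max_(i < (size s).+1 | pdec (in_H k (take i s))) i.

(* greedy partition count (fuel = size s suffices, each step removes >= 1 entry) *)
Fixpoint greedy_count (fuel k : nat) (s : seq nat) : nat :=
  match fuel with
  | 0 => 0
  | f.+1 => if s is [::] then 0
            else (greedy_count f k (drop (maxn 1 (first_len k s)) s)).+1
  end.

(* s_k(pi), for k >= 2 *)
Definition s_k (k n : nat) (pi : 'S_n) : nat := greedy_count n k (word pi).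

(* For al: an alternating pattern of tau (or of tau^-1, containment passing to
   inverses) meets the deleted entry in at most one position; dropping that
   position together with a neighbour preserves the parities of the remaining
   positions, so what is left is an alternating pattern of sigma (or sigma^-1)
   that is shorter by two.

   For s_k: h^+(w) < k exactly when every factor of w of length at least k is
   a (+)-sum of two nonempty words, and likewise for h^-. Hence membership in
   H_k^+ u H_k^- is inherited by factors and depends only on the relative order
   of the letters, so the greedy partition is optimal: s_k(w) is the least
   number of parts in a partition of w into factors lying in H_k^+ u H_k^-.
   Cutting an optimal partition of the word of sigma at the insertion point and
   adding the new letter as a part of its own gives a partition of the word of
   tau with at most two more parts. *)

From mathcomp Require Import all_boot all_fingroup zify.
From Stdlib Require Import ClassicalEpsilon.

Set Implicit Arguments.
Unset Strict Implicit.
Unset Printing Implicit Defensive.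

(** * Patterns and alternating permutations *)

Section Increasing.
Variables (m n : nat) (f : 'I_m -> 'I_n).
Hypothesis f_incr : {homo f : i j / i < j}.

Lemma incr_mono : {mono f : i j / i < j}.
Proof.
move=> i j; case: (ltngtP i j) => [lt_ij | lt_ji | /val_inj ->]; first exact: f_incr.
  by apply/negbTE; rewrite -leqNgt ltnW // f_incr.
exact: ltnn.
Qed.

Lemma incr_inj : injective f.
Proof.
move=> i j fij; apply: val_inj.
by case: (ltngtP i j) => // /f_incr; rewrite fij ltnn.
Qed.

End Increasing.

Lemma containsP m n (rho : 'S_m) (pi : 'S_n) :
  reflect (exists2 f : 'I_m -> 'I_n, {homo f : i j / i < j}
             & forall i j, (rho i < rho j) = (pi (f i) < pi (f j)))
          (contains rho pi).
Proof.
apply: (iffP existsP) => [[f /andP[/forallP f_incr /forallP f_iso]] | [f f_incr f_iso]].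
  by exists f => i j; [apply/implyP/(forallP (f_incr i)) | exact: eqP (forallP (f_iso i) j)].
exists [ffun i => f i]; apply/andP; split; apply/forallP => i; apply/forallP => j;
  rewrite !ffunE; [exact/implyP/f_incr | exact/eqP/f_iso].
Qed.

Lemma contains_size m n (rho : 'S_m) (pi : 'S_n) : contains rho pi -> m <= n.
Proof.
by case/containsP=> f /incr_inj f_inj _; have := leq_card _ f_inj; rewrite !card_ord.
Qed.

Lemma contains_inv m n (rho : 'S_m) (pi : 'S_n) :
  contains rho pi -> contains (rho^-1)%g (pi^-1)%g.
Proof.
case/containsP=> f f_incr f_iso; apply/containsP.
exists (fun y => pi (f ((rho^-1)%g y))) => [y z lt_yz | y z]; first by rewrite -f_iso !permKV.
by rewrite !permK (incr_mono f_incr).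
Qed.

Lemma exists_rank_perm m (v : 'I_m -> nat) : injective v ->
  exists r : 'S_m, forall i j, (r i < r j) = (v i < v j).
Proof.
move=> v_inj; pose rank i := #|[pred j | v j < v i]|.
have rank_lt i : rank i < m.
  rewrite -[m]card_ord; apply: proper_card; apply/properP.
  by split; [apply/subsetP | exists i; rewrite ?inE /= ?ltnn].
have rank_mono i j : v i < v j -> rank i < rank j.
  move=> lt_ij; apply: proper_card; apply/properP; split.
    by apply/subsetP => x; rewrite !inE => /ltn_trans; apply.
  by exists i; rewrite !inE ?lt_ij ?ltnn.
have rank_iso i j : (rank i < rank j) = (v i < v j).
  case: (ltngtP (v i) (v j)) => [/rank_mono // | /rank_mono lt_ji | /v_inj -> ].
    by apply/negbTE; rewrite -leqNgt ltnW.
  exact: ltnn.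
have rank_inj : injective (fun i => Ordinal (rank_lt i)).
  move=> i j /(congr1 val) /= eq_ij; apply: v_inj; apply/eqP.
  by case: (ltngtP (v i) (v j)) => // /rank_mono; rewrite eq_ij ltnn.
by exists (perm rank_inj) => i j; rewrite !permE; apply: rank_iso.
Qed.

Lemma codom_injS n (g : 'I_n -> 'I_n.+1) : injective g ->
  exists e, forall x, (x \in codom g) = (x != e).
Proof.
move=> g_inj; have /card1P[e codomC_e] : #|[predC codom g]| == 1.
  by rewrite -(eqn_add2l #|codom g|) cardC card_codom // !card_ord addn1.
by exists e => x; have := codomC_e x; rewrite !inE => <-; rewrite negbK.
Qed.

Lemma sorted_enum_ord N : sorted (fun i j : 'I_N => i < j) (enum 'I_N).
Proof. by have := iota_ltn_sorted 0 N; rewrite -val_enum_ord sorted_map. Qed.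

Lemma enum_split_codom n (g : 'I_n -> 'I_n.+1) : {homo g : i j / i < j} ->
  exists X e Y, enum 'I_n.+1 = X ++ e :: Y /\ map g (enum 'I_n) = X ++ Y.
Proof.
move=> g_incr; have [e codom_e] := codom_injS (incr_inj g_incr).
have [X [Y E]] : exists X Y, enum 'I_n.+1 = X ++ e :: Y.
  have : e \in enum 'I_n.+1 by rewrite mem_enum.
  by case/splitPr => X Y; exists X, Y.
exists X, e, Y; split => //.
have lt_trans : transitive (fun i j : 'I_n.+1 => i < j) by move=> ? ? ?; apply: ltn_trans.
apply: (irr_sorted_eq lt_trans (fun i => ltnn i)).
- by rewrite sorted_map; apply: sub_sorted (sorted_enum_ord n) => i j; apply: g_incr.
- apply: (subseq_sorted lt_trans (s2 := enum 'I_n.+1)); last exact: sorted_enum_ord.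
  by rewrite E cat_subseq // subseq_cons.
move=> x; rewrite -codomE codom_e.
have := enum_uniq 'I_n.+1; rewrite E cat_uniq /= => /and4P[_ /norP[eX _] eY _].
case: (eqVneq x e) => [-> | xe]; first by rewrite mem_cat (negbTE eX) (negbTE eY).
have : x \in X ++ e :: Y by rewrite -E mem_enum.
by rewrite !mem_cat inE (negbTE xe).
Qed.

Lemma skip_pair m q : exists h : 'I_(m - 2) -> 'I_m,
  [/\ {homo h : i j / i < j}, forall i, odd (h i) = odd i & forall i, h i != q :> nat].
Proof.
pose p := minn q (m - 2).
have h_lt (i : 'I_(m - 2)) : (if i < p then i : nat else i.+2) < m.
  by case: (ltnP i p); have := ltn_ord i; lia.
exists (fun i => Ordinal (h_lt i)); split => [i j /= lt_ij | i /= | i /=].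
- by case: (ltnP i p); case: (ltnP j p); lia.
- by case: (ltnP i p) => //= _; rewrite negbK.
- by apply/eqP; case: (ltnP i p); have := ltn_ord i; rewrite /p; lia.
Qed.

Lemma alternating_pattern_drop2 n m (sigma : 'S_n) (tau : 'S_n.+1) (rho : 'S_m) :
  contains sigma tau -> contains rho tau -> alternating rho ->
  exists2 rho' : 'S_(m - 2), alternating rho' & contains rho' sigma.
Proof.
case/containsP=> g g_incr g_iso /containsP[f f_incr f_iso] rho_alt.
have [e codom_e] := codom_injS (incr_inj g_incr).
have [q q_in] : exists q, forall i : 'I_m, val i != q -> f i \in codom g.
  case: (pickP (fun i => f i == e)) => [i0 /eqP fi0 | f_ne]; last first.
    by exists 0 => i _; rewrite codom_e f_ne.
  exists (val i0) => i; rewrite codom_e; apply: contra => /eqP fi.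
  by rewrite (incr_inj f_incr (etrans fi (esym fi0))).
have [h [h_incr h_odd h_q]] := skip_pair m q.
have fh_in i : f (h i) \in codom g := q_in _ (h_q i).
have rho_h_inj : injective (fun i => val (rho (h i))).
  by move=> i j /val_inj /perm_inj /(incr_inj h_incr).
have [r r_iso] := exists_rank_perm rho_h_inj.
exists r.
  apply/forallP => i; apply/forallP => j; apply/implyP => ij_parity; rewrite r_iso.
  by apply: (implyP (forallP (forallP rho_alt (h i)) (h j))); rewrite !h_odd.
apply/containsP; exists (fun i => iinv (fh_in i)) => [i j lt_ij | i j].
  by rewrite -(incr_mono g_incr) !f_iinv f_incr // h_incr.
by rewrite r_iso f_iso g_iso !f_iinv.
Qed.

Lemma leq_al n m (pi : 'S_n) (rho : 'S_m) :
  alternating rho -> contains rho pi || contains rho (pi^-1)%g -> m <= al pi.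
Proof.
move=> rho_alt rho_in.
have lt_mn : m < n.+1 by case/orP: rho_in => /contains_size.
by apply: (leq_bigmax_cond (Ordinal lt_mn)); apply/existsP; exists rho; rewrite rho_alt.
Qed.

Lemma al_one_point_ext n (sigma : 'S_n) (tau : 'S_n.+1) :
  contains sigma tau -> al tau <= al sigma + 2.
Proof.
move=> sub; apply/bigmax_leqP => m /existsP[rho /andP[rho_alt rho_in]].
rewrite addnC -leq_subLR; case/orP: rho_in => rho_tau.
  have [rho' alt' sub'] := alternating_pattern_drop2 sub rho_tau rho_alt.
  by apply: (leq_al alt'); rewrite sub'.
have [rho' alt' sub'] := alternating_pattern_drop2 (contains_inv sub) rho_tau rho_alt.
by apply: (leq_al alt'); rewrite sub' orbT.
Qed.

(** * Block decompositions *)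

Lemma infix_flatten (T : eqType) (b : seq T) (bs : seq (seq T)) :
  b \in bs -> infix b (flatten bs).
Proof. by case/splitPr=> bs1 bs2; rewrite flatten_cat /= infix_infix. Qed.

Lemma infix_map (T U : eqType) (G : T -> U) s t :
  infix s t -> infix (map G s) (map G t).
Proof. by case/infixP=> p [q ->]; rewrite !map_cat infix_infix. Qed.

Lemma infix_map_inv (T U : eqType) (G : T -> U) u t :
  infix u (map G t) -> exists2 s, infix s t & u = map G s.
Proof.
case/infixP=> p [q E]; exists (take (size u) (drop (size p) t)).
  exact: infix_trans (infix_take _ _) (suffixW (suffix_drop _ _)).
by rewrite map_take map_drop E drop_size_cat // take_size_cat.
Qed.

Section BlockDecomposition.
Variable r : rel nat.
Implicit Types (s t : seq nat) (bs : seq (seq nat)).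

Definition splits_at s i := allrel r (take i s) (drop i s).
Definition indecomposable s := ~~ [exists i : 'I_(size s), (0 < i) && splits_at s i].
Definition block_decomp s bs :=
  [/\ flatten bs = s, all (fun b => b != [::]) bs, all indecomposable bs
    & pairwise (allrel r) bs].

Definition factors_split k s := forall t, infix t s -> k <= size t -> ~~ indecomposable t.

Lemma indecomposablePn s :
  reflect (exists2 i, 0 < i < size s & splits_at s i) (~~ indecomposable s).
Proof.
rewrite negbK; apply: (iffP existsP) => [[i /andP[i0 si]] | [i /andP[i0 ilt] si]].
  by exists i; rewrite ?i0 ?ltn_ord.
by exists (Ordinal ilt); rewrite i0.
Qed.

Lemma block_decomp_exists s : exists bs, block_decomp s bs.
Proof.
have [N] := ubnP (size s); elim: N s => // N IH s ltsN.
have [s_indec | /indecomposablePn[i /andP[i0 ilt] si]] := boolP (indecomposable s).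
  case: s s_indec {ltsN} => [|x s] x_indec; first by exists [::].
  by exists [:: x :: s]; rewrite /block_decomp /= cats0 x_indec.
have [bs1 [fl1 ne1 in1 pw1]] : exists bs, block_decomp (take i s) bs.
  by apply: IH; rewrite size_take ilt; lia.
have [bs2 [fl2 ne2 in2 pw2]] : exists bs, block_decomp (drop i s) bs.
  by apply: IH; rewrite size_drop; lia.
exists (bs1 ++ bs2); split.
- by rewrite flatten_cat fl1 fl2 cat_take_drop.
- by rewrite all_cat ne1 ne2.
- by rewrite all_cat in1 in2.
rewrite pairwise_cat pw1 pw2 !andbT; apply/allrelP => b1 b2 b1in b2in.
apply/allrelP => x y xb1 yb2; apply: (allrelP si).
  by rewrite -fl1; apply/flattenP; exists b1.
by rewrite -fl2; apply/flattenP; exists b2.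
Qed.

Lemma long_factor_splits bs p t q :
  pairwise (allrel r) bs -> flatten bs = p ++ t ++ q -> t != [::] ->
  (forall b, b \in bs -> size b < size t) -> ~~ indecomposable t.
Proof.
move=> + + /negPf t_ne; elim: bs p => [|b bs IH] p /=.
  by case: p t t_ne => [|? ?] [|? ?].
move=> /andP[b_rel pw] E small.
have lt_bt : size b < size t by apply: small; rewrite mem_head.
have [le_bp | lt_pb] := leqP (size b) (size p).
  apply: (IH (drop (size b) p)) => [//||c cbs]; last by apply: small; rewrite inE cbs orbT.
  move/(congr1 (drop (size b))): E; rewrite drop_size_cat //.
  rewrite -{1}(cat_take_drop (size b) p) -catA drop_size_cat // size_take_min.
  exact/minn_idPl.
set u := drop (size p) b.
have Eu : u ++ flatten bs = t ++ q.
  by move/(congr1 (drop (size p))): E; rewrite drop_cat lt_pb drop_size_cat.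
have lt_ut : size u < size t by rewrite size_drop; lia.
have take_t : take (size u) t = u.
  by move/(congr1 (take (size u))): Eu; rewrite take_size_cat // takel_cat // ltnW.
have drop_t : drop (size u) t ++ q = flatten bs.
  by move/(congr1 (drop (size u))): Eu; rewrite drop_size_cat // drop_cat lt_ut.
apply/indecomposablePn; exists (size u); first by rewrite lt_ut size_drop subn_gt0 lt_pb.
apply/allrelP => x y; rewrite take_t => /mem_drop xb yt.
have /flattenP[c cbs yc] : y \in flatten bs by rewrite -drop_t mem_cat yt.
exact: (allrelP (allP b_rel c cbs)).
Qed.

Lemma small_blocksP k s : 0 < k ->
  (exists bs, block_decomp s bs /\ \max_(b <- bs) size b < k) <-> factors_split k s.
Proof.
move=> k_gt0; split=> [[bs [[fl _ _ pw] small]] | fs].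
  move=> t /infixP[p [q E]] kt; rewrite -fl in E; apply: (long_factor_splits pw E).
    by rewrite -size_eq0 -lt0n (leq_trans k_gt0).
  by move=> b bbs; apply: leq_trans kt; apply: leq_ltn_trans small; apply: leq_bigmax_seq.
have [bs [fl ne indec pw]] := block_decomp_exists s; exists bs; split => //.
rewrite -(prednK k_gt0) ltnS; apply/bigmax_leqP_seq => b bbs _.
rewrite -ltnS prednK // ltnNge; apply/negP => kb.
have := fs b; rewrite -fl infix_flatten // => /(_ isT kb).
by rewrite (allP indec).
Qed.

Lemma factors_split_infix k s t : infix t s -> factors_split k s -> factors_split k t.
Proof. by move=> ts fs u ut; apply: fs; apply: infix_trans ut ts. Qed.

Lemma factors_split_small k s : size s < k -> factors_split k s.
Proof.
move=> sk t /infixW/size_subseq ts kt.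
by have := leq_trans kt ts; rewrite leqNgt sk.
Qed.

End BlockDecomposition.

Lemma splits_at_map r (T : Type) (F : T -> nat) t i :
  splits_at r (map F t) i = allrel (fun x y => r (F x) (F y)) (take i t) (drop i t).
Proof. by rewrite /splits_at -map_take -map_drop allrel_mapl allrel_mapr. Qed.

Section BlockRelabel.
Variables (r : rel nat) (T : eqType) (F F' : T -> nat).
Hypothesis eqF : forall x y, r (F x) (F y) = r (F' x) (F' y).

Lemma indecomposable_relabel t :
  indecomposable r (map F t) = indecomposable r (map F' t).
Proof.
rewrite -[LHS]negbK -[RHS]negbK; congr negb.
apply/(indecomposablePn r)/(indecomposablePn r) => -[i];
  rewrite !size_map splits_at_map ?(eq_allrel eqF) => ilt si;
  by exists i; rewrite ?size_map ?splits_at_map ?(eq_allrel eqF).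
Qed.

Lemma factors_split_relabel k I :
  factors_split r k (map F I) -> factors_split r k (map F' I).
Proof.
move=> fs _ /infix_map_inv[t tI ->]; rewrite size_map -indecomposable_relabel => kt.
by apply: fs; rewrite ?size_map // infix_map.
Qed.

End BlockRelabel.

Lemma pdecP (P : Prop) : reflect P (pdec P).
Proof. by rewrite /pdec; case: excluded_middle_informative => p; constructor. Qed.

Definition in_Hb k s := pdec (in_H k s).

Section SmallBlocks.
Variable k : nat.
Hypothesis k_gt0 : 0 < k.

Lemma in_HP s : in_H k s <->
  factors_split (fun x y => x < y) k s \/ factors_split (fun x y => y < x) k s.
Proof.
(* [in_Hplus] and [in_Hminus] unfold to the left-hand side of [small_h] for [<] and [>]. *)
have small_h r : (exists h, (exists bs, block_decomp r s bs /\ h = \max_(b <- bs) size b)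
                            /\ h < k) <-> factors_split r k s.
  rewrite -small_blocksP //; split=> [[_ [[bs [? ->]] ?]] | [bs [? ?]]]; first by exists bs.
  by exists (\max_(b <- bs) size b); split; first exists bs.
split=> [[/(small_h (fun x y => x < y)) | /(small_h (fun x y => y < x))] |
         [/(small_h (fun x y => x < y)) | /(small_h (fun x y => y < x))]];
  by [left | right].
Qed.

Lemma in_Hb_infix s t : infix t s -> in_Hb k s -> in_Hb k t.
Proof.
move=> ts /pdecP/in_HP fs; apply/pdecP/in_HP.
by case: fs => fs; [left | right]; apply: factors_split_infix ts fs.
Qed.

Lemma in_Hb_small s : size s < k -> in_Hb k s.
Proof. by move=> sk; apply/pdecP/in_HP; left; apply: factors_split_small. Qed.

Lemma in_Hb_relabel (T : eqType) (F F' : T -> nat) I :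
  (forall x y, (F x < F y) = (F' x < F' y)) -> in_Hb k (map F I) = in_Hb k (map F' I).
Proof.
move=> eqF; apply/pdecP/pdecP => /in_HP fs; apply/in_HP.
  by case: fs => fs; [left | right]; apply: factors_split_relabel fs.
by case: fs => fs; [left | right]; apply: factors_split_relabel fs.
Qed.

End SmallBlocks.

(** * The greedy partition *)

Section Greedy.
Variable k : nat.
Hypothesis k_gt1 : 1 < k.
Let k_gt0 : 0 < k := ltnW k_gt1.
Implicit Types (s x y : seq nat) (parts : seq (seq nat)).

Lemma first_len_max s i : i <= size s -> in_Hb k (take i s) -> i <= first_len k s.
Proof. by rewrite -ltnS => lt_is; apply: (leq_bigmax_cond (Ordinal lt_is)). Qed.

Lemma first_len_le_size s : first_len k s <= size s.
Proof. by apply/bigmax_leqP => i _; rewrite -ltnS. Qed.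

Lemma in_Hb_first_len s : in_Hb k (take (first_len k s) s).
Proof.
have H0 : in_Hb k (take (@ord0 (size s)) s) by rewrite take0 in_Hb_small // ltnW.
by rewrite /first_len (bigmax_eq_arg _ H0); case: arg_maxnP.
Qed.

Definition greedy_len s := maxn 1 (first_len k s).

Lemma in_Hb_greedy_prefix s : in_Hb k (take (greedy_len s) s).
Proof.
rewrite /greedy_len; case: leqP => _; first exact: in_Hb_first_len.
by apply: (in_Hb_small k_gt0); rewrite size_take_min (leq_ltn_trans (geq_minl _ _) k_gt1).
Qed.

Lemma greedy_len_le_size s : s != [::] -> greedy_len s <= size s.
Proof. by rewrite geq_max first_len_le_size andbT lt0n size_eq0. Qed.

Definition greedy s := greedy_count (size s) k s.

Lemma greedy_count_fuel f g s :
  size s <= f -> size s <= g -> greedy_count f k s = greedy_count g k s.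
Proof.
elim: f g s => [|f IH] [|g] [|a s] //= le_sf le_sg; congr S.
by apply: IH; rewrite size_drop /=; lia.
Qed.

Lemma greedy_cons s : s != [::] -> greedy s = (greedy (drop (greedy_len s) s)).+1.
Proof.
case: s => // a s _; rewrite /greedy /=; congr S.
by apply: greedy_count_fuel; rewrite size_drop /=; lia.
Qed.

Lemma greedy_drop_le_parts parts j :
  all (in_Hb k) parts -> greedy (drop j (flatten parts)) <= size parts.
Proof.
elim: parts j => [|p ps IH] j /=; first by case: j.
case/andP=> Hp Hps; have [le_pj | lt_jp] := leqP (size p) j.
  by rewrite drop_cat ltnNge le_pj /= (leq_trans (IH _ Hps)).
set s := drop j (p ++ flatten ps).
have Es : s = drop j p ++ flatten ps by rewrite /s drop_cat lt_jp.
have s_ne : s != [::].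
  by rewrite Es -size_eq0 size_cat size_drop addn_eq0 subn_eq0 leqNgt lt_jp.
have le_len : size (drop j p) <= greedy_len s.
  apply: leq_trans (leq_maxr 1 _); apply: first_len_max.
    by rewrite Es size_cat leq_addr.
  by rewrite Es take_size_cat //; apply: in_Hb_infix (suffixW (suffix_drop _ _)) Hp.
by rewrite (greedy_cons s_ne) ltnS {2}Es drop_cat ltnNge le_len /= IH.
Qed.

Lemma greedy_le_parts parts : all (in_Hb k) parts -> greedy (flatten parts) <= size parts.
Proof. by move/(greedy_drop_le_parts 0); rewrite drop0. Qed.

Lemma greedy_le1 s : in_Hb k s -> greedy s <= 1.
Proof. by move=> Hs; have := @greedy_le_parts [:: s]; rewrite /= cats0 Hs; apply. Qed.

Lemma greedy_partition s :
  exists parts, [/\ flatten parts = s, all (in_Hb k) parts & size parts = greedy s].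
Proof.
have [N] := ubnP (size s); elim: N s => // N IH s lt_sN.
have [-> | s_ne] := eqVneq s [::]; first by exists [::].
have [|parts [fl Hparts sz]] := IH (drop (greedy_len s) s).
  by rewrite size_drop; have := greedy_len_le_size s_ne; rewrite /greedy_len; lia.
exists (take (greedy_len s) s :: parts); split.
- by rewrite /= fl cat_take_drop.
- by rewrite /= in_Hb_greedy_prefix.
by rewrite /= sz (greedy_cons s_ne).
Qed.

Lemma greedy_cat_le x y : greedy (x ++ y) <= greedy x + greedy y.
Proof.
have [px [<- Hx <-]] := greedy_partition x.
have [py [<- Hy <-]] := greedy_partition y.
by rewrite -flatten_cat -size_cat greedy_le_parts // all_cat Hx.
Qed.

Lemma greedy_take_drop_le_parts parts j : all (in_Hb k) parts ->
  greedy (take j (flatten parts)) + greedy (drop j (flatten parts)) <= (size parts).+1.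
Proof.
elim: parts j => [|p ps IH] j /=; first by case: j.
case/andP=> Hp Hps; have [le_pj | lt_jp] := leqP (size p) j.
  rewrite take_cat drop_cat ltnNge le_pj /=.
  have := greedy_cat_le p (take (j - size p) (flatten ps)).
  by have := greedy_le1 Hp; have := IH (j - size p) Hps; lia.
rewrite take_cat drop_cat lt_jp.
have := greedy_le1 (in_Hb_infix k_gt0 (prefixW (prefix_take p j)) Hp).
have := @greedy_le_parts (drop j p :: ps).
by rewrite /= Hps (in_Hb_infix k_gt0 (suffixW (suffix_drop _ _)) Hp) => /(_ isT); lia.
Qed.

Lemma greedy_cat_ge x y : greedy x + greedy y <= (greedy (x ++ y)).+1.
Proof.
have [parts [fl Hparts <-]] := greedy_partition (x ++ y).
have := greedy_take_drop_le_parts (size x) Hparts.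
by rewrite fl take_size_cat // drop_size_cat.
Qed.

Lemma greedy_insert x a y : greedy (x ++ a :: y) <= (greedy (x ++ y)).+2.
Proof.
have := greedy_cat_le [:: a] y; rewrite cat1s (_ : greedy [:: a] = 1) //.
by have := greedy_cat_ge x y; have := greedy_cat_le x (a :: y); lia.
Qed.

Section GreedyRelabel.
Variables (T : eqType) (F F' : T -> nat).
Hypothesis eqF : forall u v, (F u < F v) = (F' u < F' v).

Lemma first_len_relabel I : first_len k (map F I) = first_len k (map F' I).
Proof.
rewrite /first_len !size_map; apply: eq_bigl => i.
by rewrite -!map_take; apply: (in_Hb_relabel k_gt0 _ eqF).
Qed.

Lemma greedy_count_relabel f I : greedy_count f k (map F I) = greedy_count f k (map F' I).
Proof.
elim: f I => [|f IH] [|a I] //.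
have E G : greedy_count f.+1 k (map G (a :: I)) =
    (greedy_count f k (map G (drop (maxn 1 (first_len k (map G (a :: I)))) (a :: I)))).+1.
  by rewrite map_drop.
by rewrite !E first_len_relabel IH.
Qed.

End GreedyRelabel.

End Greedy.

Lemma s_k_one_point_ext k n (sigma : 'S_n) (tau : 'S_n.+1) :
  1 < k -> contains sigma tau -> s_k k tau <= s_k k sigma + 2.
Proof.
move=> k_gt1 /containsP[g g_incr g_iso].
have [X [e [Y [E_tau E_sigma]]]] := enum_split_codom g_incr.
pose t i := (tau i : nat).
have -> : s_k k sigma = greedy k (map t (X ++ Y)).
  rewrite /s_k /word (greedy_count_relabel k_gt1 (F' := t \o g)) // map_comp E_sigma.
  by rewrite /greedy size_map -E_sigma size_map size_enum_ord.
have size_tau : size (map t X ++ t e :: map t Y) = n.+1.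
  by rewrite -map_cons -map_cat size_map -E_tau size_enum_ord.
have -> : s_k k tau = greedy k (map t X ++ t e :: map t Y).
  by rewrite /greedy size_tau /s_k /word E_tau map_cat.
by rewrite map_cat addn2; apply: greedy_insert.
Qed.

Theorem mainTheorem5 (n : nat) (sigma : 'S_n) (tau : 'S_n.+1) :
  contains sigma tau ->
  al tau <= al sigma + 2 /\
  (forall k : nat, 2 <= k -> s_k k tau <= s_k k sigma + 2).
Proof.
move=> sub; split; first exact: al_one_point_ext.
by move=> k k_gt1; apply: s_k_one_point_ext.
Qed.
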